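(* Let $h:B^d\to{\mathbb R}$ be a $C^2$ function such that $L^{-1}\operatorname{Hess}h$ is $\Gamma$-invariant, i.e. for all $A\in\Gamma$, $x\in B^d$, $X,Y\in{\mathbb R}^d$, $$L(x)^{-1}\operatorname{Hess}h(x)(X,Y)=L(A\cdot x)^{-1}\operatorname{Hess}h(A\cdot x)\big(DA(x)X,DA(x)Y\big),$$ where $DA(x)$ is the differential of $y\mapsto A\cdot y$ at $x$. Then there exists a unique cocycle $\tau\in Z^1(\Gamma,{\mathbb R}^{d,1})$ such that $h$ is $\tau$-equivariant.
   Context: Notation. $B^d$ denotes the open Euclidean unit ball of ${\mathbb R}^d$; $\langle\cdot,\cdot\rangle_d$ and $\|\cdot\|$ are the Euclidean inner product and norm, $L(x)=\sqrt{1-\|x\|^2}$, and $\operatorname{Hess}$ is the Euclidean Hessian. Minkowski space ${\mathbb R}^{d,1}$ is ${\mathbb R}^{d+1}$ with $\langle x,y\rangle_{d,1}=x_1y_1+\dots+x_dy_d-x_{d+1}y_{d+1}$; for $v\in{\mathbb R}^{d,1}$ write $v=(\bar v,v_{d+1})$. $O_+(d,1)$ is the group of linear maps preserving $\langle\cdot,\cdot\rangle_{d,1}$ and the sheet $\{\langle x,x\rangle_{d,1}=-1,\ x_{d+1}>0\}$. For $A\in O_+(d,1)$, $x\in B^d$, $A\cdot x\in B^d$ is the unique point with $A\binom{x}{1}\in{\mathbb R}_{>0}\binom{A\cdot x}{1}$; this is an isometry of the Klein metric $g_{{\mathbb H}^d}(x)(X,Y)=L(x)^{-2}\langle X,Y\rangle_d+L(x)^{-4}\langle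 x,X\rangle_d\langle x,Y\rangle_d$. Action on functions. $((A,v)h)(x)=\frac{L(x)}{L(A^{-1}\cdot x)}h(A^{-1}\cdot x)+\langle x,\bar v\rangle_d-v_{d+1}$. Group setup. $d\ge2$ and $\Gamma\subset O_+(d,1)$ is a subgroup such that the action $x\mapsto A\cdot x$ of $\Gamma$ on $B^d$ is free, properly discontinuous and cocompact, so that $M_\Gamma=(B^d,g_{{\mathbb H}^d})/\Gamma$ is a compact oriented hyperbolic manifold. A cocycle is a map $\tau:\Gamma\to{\mathbb R}^{d,1}$ with $\tau(AB)=\tau(A)+A\tau(B)$; they form the vector space $Z^1(\Gamma,{\mathbb R}^{d,1})$. For a cocycle $\tau$, a continuous $h:B^d\to{\mathbb R}$ is $\tau$-equivariant if $(A,\tau(A))h=h$ for all $A\in\Gamma$. *)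

From Stdlib Require Import Reals List.
From mathcomp Require Import ssreflect ssrfun ssrbool eqtype ssrnat seq fintype bigop.
Set Implicit Arguments. Unset Strict Implicit.
Open Scope R_scope.

Definition vec (n : nat) := 'I_n -> R.
Definition rsum n (F : 'I_n -> R) : R := \big[Rplus/R0]_(i < n) F i.
Definition dot n (x y : vec n) : R := rsum (fun i => x i * y i).
Definition vadd n (x y : vec n) : vec n := fun i => x i + y i.
Definition vsub n (x y : vec n) : vec n := fun i => x i - y i.
Definition vscale n (t : R) (x : vec n) : vec n := fun i => t * x i.
Definition enorm n (x : vec n) : R := sqrt (dot x x).
Definition basis n (i : 'I_n) : vec n := fun j => if j == i then 1 else 0.

Definition in_ball d (x : vec d) : Prop := dot x x < 1.
Definition Lf d (x : vec d) : R := sqrt (1 - dot x x).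

(* Minkowski space R^{d,1} = vec d.+1, last coordinate (ord_max) is x_{d+1} *)
Definition vbar d (v : vec d.+1) : vec d := fun i => v (widen_ord (leqnSn d) i).
Definition vlast d (v : vec d.+1) : R := v ord_max.
Definition mink d (v w : vec d.+1) : R := dot (vbar v) (vbar w) - vlast v * vlast w.
(* (x, 1) *)
Definition hom d (x : vec d) : vec d.+1 :=
  fun i => match (insub (nat_of_ord i) : option 'I_d) with Some j => x j | None => 1 end.

Definition mmat d := 'I_d.+1 -> 'I_d.+1 -> R.
Definition mapp d (A : mmat d) (v : vec d.+1) : vec d.+1 :=
  fun i => rsum (fun j => A i j * v j).
Definition mmul d (A B : mmat d) : mmat d :=
  fun i k => rsum (fun j => A i j * B j k).
Definition mid (d : nat) : mmat d := fun i j => if i == j then 1 else 0.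
Arguments mid : clear implicits.

Definition in_Oplus d (A : mmat d) : Prop :=
  (forall v w, mink (mapp A v) (mapp A w) = mink v w) /\
  (forall v, mink v v = -1 -> vlast v > 0 -> vlast (mapp A v) > 0).

(* A . x : the point with A (x,1) in R_{>0} (A.x, 1) *)
Definition act d (A : mmat d) (x : vec d) : vec d :=
  fun i => vbar (mapp A (hom x)) i / vlast (mapp A (hom x)).

Definition is_subgroup d (G : mmat d -> Prop) : Prop :=
  (forall A, G A -> in_Oplus A) /\ G (mid d) /\
  (forall A B, G A -> G B -> G (mmul A B)) /\
  (forall A, G A -> exists B, G B /\ mmul A B = mid d /\ mmul B A = mid d).

Definition free_action d (G : mmat d -> Prop) : Prop :=
  forall A x, G A -> in_ball x -> act A x = x -> A = mid d.

Definition vconv d (u : nat -> vec d) (l : vec d) : Prop :=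
  forall eps, eps > 0 -> exists N : nat, forall n : nat, (N <= n)%N -> enorm (vsub (u n) l) < eps.

Definition compact_set d (K : vec d -> Prop) : Prop :=
  forall u : nat -> vec d, (forall n, K (u n)) ->
  exists phi : nat -> nat, (forall n, (phi n < phi n.+1)%N) /\
    exists l, K l /\ vconv (fun n => u (phi n)) l.

Definition prop_discontinuous d (G : mmat d -> Prop) : Prop :=
  forall K : vec d -> Prop, compact_set K -> (forall x, K x -> in_ball x) ->
  exists l : list (mmat d), forall A, G A -> (exists x, K x /\ K (act A x)) -> In A l.

Definition cocompact d (G : mmat d -> Prop) : Prop :=
  exists K : vec d -> Prop, compact_set K /\ (forall x, K x -> in_ball x) /\
    forall x, in_ball x -> exists A, G A /\ K (act A x).

Definition has_partial d (f : vec d -> R) (i : 'I_d) (x : vec d) (l : R) : Prop :=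
  derivable_pt_lim (fun t => f (vadd x (vscale t (basis i)))) 0 l.

Definition cont_on_ball d (f : vec d -> R) : Prop :=
  forall x, in_ball x -> forall eps, eps > 0 -> exists delta, delta > 0 /\
    forall y, in_ball y -> enorm (vsub y x) < delta -> Rabs (f y - f x) < eps.

(* h is C^2 on B^d, with first partials Dh i = d_i h and second partials
   D2h i j = d_j d_i h *)
Definition C2_with d (h : vec d -> R) (Dh : 'I_d -> vec d -> R)
    (D2h : 'I_d -> 'I_d -> vec d -> R) : Prop :=
  cont_on_ball h /\ (forall i, cont_on_ball (Dh i)) /\
  (forall i j, cont_on_ball (D2h i j)) /\
  (forall i x, in_ball x -> has_partial h i x (Dh i x)) /\
  (forall i j x, in_ball x -> has_partial (Dh i) j x (D2h i j x)).

Definition Hess d (D2h : 'I_d -> 'I_d -> vec d -> R) (x X Y : vec d) : R :=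
  rsum (fun i => rsum (fun j => D2h i j x * X i * Y j)).

Definition has_dir_deriv d (F : vec d -> vec d) (x X V : vec d) : Prop :=
  forall i, derivable_pt_lim (fun t => F (vadd x (vscale t X)) i) 0 (V i).

Definition cocycle d (G : mmat d -> Prop) (tau : mmat d -> vec d.+1) : Prop :=
  forall A B, G A -> G B -> tau (mmul A B) = vadd (tau A) (mapp A (tau B)).

(* (A, tau A) h = h on B^d, where B = A^{-1} *)
Definition equivariant d (G : mmat d -> Prop) (tau : mmat d -> vec d.+1)
    (h : vec d -> R) : Prop :=
  forall A, G A -> forall B, mmul A B = mid d -> forall x, in_ball x ->
    Lf x / Lf (act B x) * h (act B x) + dot x (vbar (tau A)) - vlast (tau A) = h x.

(* For [B = A^-1] let [defect x := h x - L(x)/L(B.x) h(B.x)].  Along a ray [t z], [B]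
   maps [(t z, 1)] to [(p + t q) (y0 + s c, 1)] with [s = t / (p + t q)], so [defect (t z)]
   is [h (t z)] minus the perspective [(p + t q) H (t / (p + t q))] of [H s := h (y0 + s c)].
   The perspective has second derivative [p^2 H''(s) / (p + t q)^3], and the invariance of
   [L^-1 Hess h] under [A] says precisely that this equals [Hess h (t z) (z, z)].  Hence
   [defect] is affine on every ray from 0, with slope at 0 linear in [z]: it is
   [x |-> mink (x, 1) w] for some [w], i.e. [(A, w) h = h].  Such a [w] is unique, which
   makes [A |-> w] a cocycle and gives uniqueness of [tau]. *)

From Stdlib Require Import Reals Lra FunctionalExtensionality ClassicalEpsilon.
From HB Require Import structures.
From mathcomp Require Import ssreflect ssrfun ssrbool eqtype ssrnat seq fintype bigop.
From Coquelicot Require Import Coquelicot.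
Set Implicit Arguments. Unset Strict Implicit.
Open Scope R_scope.

HB.instance Definition _ := Monoid.isComLaw.Build R R0 Rplus
  (fun a b c => esym (Rplus_assoc a b c)) Rplus_comm Rplus_0_l.

Section Rsum.
Variable n : nat.
Implicit Types F G : 'I_n -> R.

Lemma rsum_ext F G : (forall i, F i = G i) -> rsum F = rsum G.
Proof. by move=> H; apply: eq_bigr => i _. Qed.

Lemma rsum_add F G : rsum (fun i => F i + G i) = rsum F + rsum G.
Proof. exact: big_split. Qed.

Lemma rsum_scal c F : c * rsum F = rsum (fun i => c * F i).
Proof.
apply: (big_rec2 (fun y1 y2 => c * y1 = y2)); first ring.
by move=> i y1 y2 _ <-; ring.
Qed.

Lemma rsum_le F G : (forall i, F i <= G i) -> rsum F <= rsum G.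
Proof.
move=> H; apply: (big_rec2 (fun y1 y2 => y1 <= y2)); first lra.
by move=> i y1 y2 _ h; have := H i; lra.
Qed.

Lemma rsum_ge0 F : (forall i, 0 <= F i) -> 0 <= rsum F.
Proof.
move=> H; apply: (big_rec (fun y => 0 <= y)); first lra.
by move=> i y _ h; have := H i; lra.
Qed.

Lemma rsum_const c : rsum (fun _ : 'I_n => c) = INR n * c.
Proof.
rewrite /rsum big_const_ord; elim: n => [|m IH] /=; first ring.
by rewrite IH; case: m IH => [|m] _ /=; ring.
Qed.

Lemma rsum_term F i : (forall j, 0 <= F j) -> F i <= rsum F.
Proof.
move=> H; rewrite /rsum (bigD1 i) //=.
rewrite -[X in X <= _]Rplus_0_r; apply: Rplus_le_compat_l.
apply: (big_rec (fun y => 0 <= y)); first lra.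
by move=> j y _ h; have := H j; lra.
Qed.

Lemma rsum_delta F i : rsum (fun j => F j * (if j == i then 1 else 0)) = F i.
Proof.
rewrite /rsum (bigD1 i) //= eqxx big1 ?Rmult_1_r ?Rplus_0_r //.
by move=> j /negbTE ->; ring.
Qed.

End Rsum.

Lemma rsum_swap n m (F : 'I_n -> 'I_m -> R) :
  rsum (fun i => rsum (fun j => F i j)) = rsum (fun j => rsum (fun i => F i j)).
Proof. exact: exchange_big. Qed.

Lemma rsum_recr n (F : 'I_n.+1 -> R) :
  rsum F = rsum (fun k : 'I_n => F (widen_ord (leqnSn n) k)) + F ord_max.
Proof. exact: big_ord_recr. Qed.

Definition mkv d (a : vec d) (r : R) : vec d.+1 :=
  fun i => match (insub (nat_of_ord i) : option 'I_d) with Some j => a j | None => r end.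

Lemma hom_mkv d (x : vec d) : hom x = mkv x 1.
Proof. by []. Qed.

Lemma vbar_mkv d (a : vec d) r : vbar (mkv a r) = a.
Proof.
apply: functional_extensionality => k; rewrite /vbar /mkv /=.
case: insubP => [k' _ e|]; last by rewrite ltn_ord.
by congr a; apply: val_inj; rewrite e.
Qed.

Lemma vlast_mkv d (a : vec d) r : vlast (mkv a r) = r.
Proof. by rewrite /vlast /mkv /= insubN // ltnn. Qed.

Lemma vbar_hom d (x : vec d) : vbar (hom x) = x.
Proof. exact: vbar_mkv. Qed.

Lemma vlast_hom d (x : vec d) : vlast (hom x) = 1.
Proof. exact: vlast_mkv. Qed.

Lemma vec_eq d (v w : vec d.+1) : vbar v = vbar w -> vlast v = vlast w -> v = w.
Proof.
move=> H1 H2; apply: functional_extensionality => i.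
case: (ltnP i d) => hi.
  have -> : i = widen_ord (leqnSn d) (Ordinal hi) by apply: val_inj.
  by have := f_equal (fun f => f (Ordinal hi)) H1.
have -> : i = ord_max.
  by apply: val_inj => /=; apply/eqP; rewrite eqn_leq hi -ltnS ltn_ord.
exact: H2.
Qed.

Lemma vbar_vadd d (u v : vec d.+1) : vbar (vadd u v) = vadd (vbar u) (vbar v).
Proof. by []. Qed.

Lemma vbar_vscale d c (u : vec d.+1) : vbar (vscale c u) = vscale c (vbar u).
Proof. by []. Qed.

Lemma vlast_vadd d (u v : vec d.+1) : vlast (vadd u v) = vlast u + vlast v.
Proof. by []. Qed.

Lemma vlast_vscale d c (u : vec d.+1) : vlast (vscale c u) = c * vlast u.
Proof. by []. Qed.

Lemma hom_line d (z X : vec d) t :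
  hom (vadd z (vscale t X)) = vadd (hom z) (vscale t (mkv X 0)).
Proof.
apply: vec_eq; first by rewrite vbar_vadd vbar_vscale !vbar_hom vbar_mkv.
by rewrite vlast_vadd vlast_vscale !vlast_hom vlast_mkv; ring.
Qed.

Lemma vadd_line d (z X : vec d) s t :
  vadd (vadd z (vscale s X)) (vscale t X) = vadd z (vscale (s + t) X).
Proof. by apply: functional_extensionality => i; rewrite /vadd /vscale; ring. Qed.

Lemma vadd_scale0 d (z X : vec d) : vadd z (vscale 0 X) = z.
Proof. by apply: functional_extensionality => i; rewrite /vadd /vscale; ring. Qed.

Section LinearMaps.
Variables (d : nat) (A : mmat d).

Lemma mapp_vadd v w : mapp A (vadd v w) = vadd (mapp A v) (mapp A w).
Proof.
apply: functional_extensionality => i; rewrite /mapp /vadd -rsum_add.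
by apply: rsum_ext => j; ring.
Qed.

Lemma mapp_vscale c v : mapp A (vscale c v) = vscale c (mapp A v).
Proof.
apply: functional_extensionality => i; rewrite /mapp /vscale rsum_scal.
by apply: rsum_ext => j; ring.
Qed.

Lemma mapp_mmul B v : mapp (mmul A B) v = mapp A (mapp B v).
Proof.
apply: functional_extensionality => i; rewrite /mapp /mmul.
under rsum_ext => j do rewrite Rmult_comm rsum_scal.
rewrite rsum_swap; apply: rsum_ext => k; rewrite rsum_scal.
by apply: rsum_ext => j; ring.
Qed.

End LinearMaps.

Lemma mapp_mid d v : mapp (mid d) v = v.
Proof.
apply: functional_extensionality => i; rewrite /mapp /mid -(rsum_delta v i).
by apply: rsum_ext => j; rewrite (eq_sym i j) Rmult_comm.
Qed.

Lemma mat_eq d (M N : mmat d) : (forall v, mapp M v = mapp N v) -> M = N.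
Proof.
move=> H; apply: functional_extensionality => i; apply: functional_extensionality => j.
have := f_equal (fun f => f i) (H (basis j)).
by rewrite /mapp /basis !rsum_delta.
Qed.

Definition vzero n : vec n := fun _ => 0.
Arguments vzero : clear implicits.

Section Bilinear.
Variable n : nat.
Implicit Types x y z : vec n.

Lemma dot_sym x y : dot x y = dot y x.
Proof. by apply: rsum_ext => i; ring. Qed.

Lemma dot_vaddl x y z : dot (vadd x y) z = dot x z + dot y z.
Proof. by rewrite /dot -rsum_add; apply: rsum_ext => i; rewrite /vadd; ring. Qed.

Lemma dot_vscalel c x z : dot (vscale c x) z = c * dot x z.
Proof. by rewrite /dot rsum_scal; apply: rsum_ext => i; rewrite /vscale; ring. Qed.

Lemma dot_vscaler c x z : dot z (vscale c x) = c * dot z x.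
Proof. by rewrite dot_sym dot_vscalel dot_sym. Qed.

Lemma dot_basis x i : dot (basis i) x = x i.
Proof. by rewrite -(rsum_delta x i); apply: rsum_ext => j; rewrite /basis Rmult_comm. Qed.

Lemma dot0 x : dot (vzero n) x = 0.
Proof. by rewrite /dot (rsum_ext (G := fun _ => 0)) ?rsum_const => *; rewrite /vzero; ring. Qed.

Lemma dot_ge0 x : 0 <= dot x x.
Proof. by apply: rsum_ge0 => i; nra. Qed.

End Bilinear.

Section Minkowski.
Variable d : nat.
Implicit Types u v w : vec d.+1.

Lemma mink_sym u w : mink u w = mink w u.
Proof. by rewrite /mink dot_sym Rmult_comm. Qed.

Lemma mink_vaddl u v w : mink (vadd u v) w = mink u w + mink v w.
Proof. by rewrite /mink vbar_vadd dot_vaddl vlast_vadd; ring. Qed.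

Lemma mink_vscalel c u w : mink (vscale c u) w = c * mink u w.
Proof. by rewrite /mink vbar_vscale dot_vscalel vlast_vscale; ring. Qed.

Lemma mink_vaddr u v w : mink w (vadd u v) = mink w u + mink w v.
Proof. by rewrite mink_sym mink_vaddl !(mink_sym w). Qed.

Lemma mink_vscaler c u w : mink w (vscale c u) = c * mink w u.
Proof. by rewrite mink_sym mink_vscalel mink_sym. Qed.

Lemma mink_mkv (a : vec d) r w : mink (mkv a r) w = dot a (vbar w) - r * vlast w.
Proof. by rewrite /mink vbar_mkv vlast_mkv. Qed.

Lemma mink_hom (z : vec d) : mink (hom z) (hom z) = dot z z - 1.
Proof. by rewrite hom_mkv mink_mkv vbar_mkv vlast_mkv; ring. Qed.

(* Test against [z = 0] and [z = e_i / 2]. *)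
Lemma mink_hom_inj u v :
  (forall z, in_ball z -> mink (hom z) u = mink (hom z) v) -> u = v.
Proof.
move=> H.
have Hz z : in_ball z -> dot z (vbar u) - vlast u = dot z (vbar v) - vlast v.
  by move=> hz; have := H z hz; rewrite hom_mkv !mink_mkv !Rmult_1_l.
have hlast : vlast u = vlast v.
  have := Hz (vzero d); rewrite /in_ball !dot0 => /(_ Rlt_0_1); lra.
apply: vec_eq => //; apply: functional_extensionality => i.
have := Hz (vscale (/2) (basis i)).
rewrite /in_ball !dot_vscalel dot_vscaler !dot_basis /basis eqxx hlast.
by move=> /(_ ltac:(lra)); lra.
Qed.

End Minkowski.

Lemma Lf_gt0 d (z : vec d) : in_ball z -> 0 < Lf z.
Proof. by rewrite /in_ball /Lf => h; apply: sqrt_lt_R0; lra. Qed.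

Lemma Lf_sq d (z : vec d) : in_ball z -> Lf z * Lf z = 1 - dot z z.
Proof. by rewrite /in_ball /Lf => h; apply: sqrt_sqrt; lra. Qed.

Lemma in_ball_scale d (z : vec d) t : in_ball z -> 0 <= t <= 1 -> in_ball (vscale t z).
Proof.
rewrite /in_ball dot_vscalel dot_vscaler => hz ht.
have := dot_ge0 z; have : t * t <= 1 by nra.
move=> htt hz0; have : (1 - t * t) * dot z z >= 0 by apply: Rle_ge; apply: Rmult_le_pos; lra.
nra.
Qed.

Lemma in_ball_coord d (z : vec d) i : in_ball z -> Rabs (z i) <= 1.
Proof.
rewrite /in_ball => hz.
have := rsum_term (F := fun j => z j * z j) i (fun j => ltac:(nra)).
rewrite -/(dot z z) => h.
have : z i * z i <= 1 by lra.
by move=> h'; split_Rabs; nra.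
Qed.

Lemma sq_le_of_abs a r : Rabs a <= r -> a * a <= r * r.
Proof. by move=> h; have := Rabs_pos a; split_Rabs; nra. Qed.

Lemma enorm_lt_of_coord d (e : R) : 0 < e -> exists rho, 0 < rho /\
  forall u : vec d, (forall i, Rabs (u i) <= rho) -> enorm u < e.
Proof.
move=> he; have hn := pos_INR d.
exists (e / (INR d + 1)); split.
  by apply: Rmult_lt_0_compat => //; apply: Rinv_0_lt_compat; lra.
move=> u hu; rewrite /enorm.
have h1 : dot u u <= INR d * (e / (INR d + 1) * (e / (INR d + 1))).
  by rewrite -rsum_const; apply: rsum_le => i; exact: sq_le_of_abs.
have h2 : INR d * (e / (INR d + 1) * (e / (INR d + 1))) < e * e.
  have -> : INR d * (e / (INR d + 1) * (e / (INR d + 1))) =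
            (e * e) * (INR d / ((INR d + 1) * (INR d + 1))) by field; lra.
  rewrite -{2}(Rmult_1_r (e * e)); apply: Rmult_lt_compat_l; first nra.
  by apply/Rlt_div_l; nra.
rewrite -(sqrt_square e); last lra.
by apply: sqrt_lt_1; [exact: dot_ge0|nra|lra].
Qed.

Lemma in_ball_open d (z : vec d) : in_ball z -> exists rho, 0 < rho /\
  forall u : vec d, (forall i, Rabs (u i) <= rho) -> in_ball (vadd z u).
Proof.
move=> hz; have hz' : dot z z < 1 := hz; have hn := pos_INR d.
set r := Rmin 1 ((1 - dot z z) / (3 * (INR d + 1))).
have hr0 : 0 < (1 - dot z z) / (3 * (INR d + 1)).
  by apply: Rmult_lt_0_compat; [lra|apply: Rinv_0_lt_compat; lra].
have hr1 : r <= 1 by apply: Rmin_l.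
have hr2 : r <= (1 - dot z z) / (3 * (INR d + 1)) by apply: Rmin_r.
exists r; split => [|u hu]; first by apply: Rmin_glb_lt => //; lra.
(* [(z_i + u_i)^2 <= z_i^2 + 3 r] since [|z_i| <= 1] and [|u_i| <= r <= 1]. *)
have h1 : dot (vadd z u) (vadd z u) <= dot z z + INR d * (3 * r).
  rewrite -rsum_const /dot -rsum_add; apply: rsum_le => i; rewrite /vadd.
  have := in_ball_coord i hz; have := hu i; move=> a b.
  have : Rabs (z i * u i) <= r.
    by rewrite Rabs_mult; have := Rabs_pos (z i); have := Rabs_pos (u i); nra.
  by have := sq_le_of_abs a; move=> c e; split_Rabs; nra.
have : INR d * (3 * r) < 1 - dot z z.
  apply: Rle_lt_trans (_ : INR d * (3 * ((1 - dot z z) / (3 * (INR d + 1)))) < _).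
    by apply: Rmult_le_compat_l => //; lra.
  have -> : INR d * (3 * ((1 - dot z z) / (3 * (INR d + 1)))) =
     (1 - dot z z) * (INR d / (INR d + 1)) by field; lra.
  rewrite -{2}(Rmult_1_r (1 - dot z z)); apply: Rmult_lt_compat_l; first lra.
  by apply/Rlt_div_l; lra.
rewrite /in_ball; lra.
Qed.

(* [act_factor B z] is the paper's [L(z) / L(B.z)], see [Lf_act]. *)
Definition act_factor d (B : mmat d) (z : vec d) : R := vlast (mapp B (hom z)).

Section Action.
Variables (d : nat) (B : mmat d).
Hypothesis HB : in_Oplus B.

Lemma act_factor_gt0 z : in_ball z -> 0 < act_factor B z.
Proof.
move=> hz; have hL := Lf_gt0 hz; have hL2 := Lf_sq hz.
have hiL : 0 < / Lf z by apply: Rinv_0_lt_compat.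
have := proj2 HB (vscale (/ Lf z) (hom z)).
rewrite mink_vscalel mink_vscaler mink_hom mapp_vscale !vlast_vscale vlast_hom.
have -> : / Lf z * (/ Lf z * (dot z z - 1)) = -1.
  have -> : dot z z - 1 = - (Lf z * Lf z) by lra.
  by field; lra.
move=> /(_ erefl); rewrite Rmult_1_r => /(_ hiL) h.
by apply: Rmult_lt_reg_l hiL _; rewrite Rmult_0_r.
Qed.

Lemma mapp_hom_act z : act_factor B z <> 0 ->
  mapp B (hom z) = vscale (act_factor B z) (hom (act B z)).
Proof.
rewrite /act_factor => hl; apply: vec_eq; last by rewrite vlast_vscale vlast_hom Rmult_1_r.
rewrite vbar_vscale vbar_hom; apply: functional_extensionality => i.
by rewrite /vscale /act; field.
Qed.

Lemma in_ball_act z : in_ball z -> in_ball (act B z) /\ Lf (act B z) = Lf z / act_factor B z.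
Proof.
move=> hz; have hl := act_factor_gt0 hz; have hL := Lf_gt0 hz; have hL2 := Lf_sq hz.
have hm := proj1 HB (hom z) (hom z).
rewrite mapp_hom_act in hm; last lra.
rewrite mink_vscalel mink_vscaler !mink_hom in hm.
set l := act_factor B z in hl hm *; set y := act B z in hm *.
have hy : 1 - dot y y = (Lf z * Lf z) / (l * l).
  rewrite hL2 (_ : 1 - dot z z = - (dot z z - 1)); last ring.
  by rewrite -hm; field; lra.
have hyb : in_ball y.
  rewrite /in_ball; have : 0 < Lf z * Lf z / (l * l).
    by apply: Rmult_lt_0_compat; [nra|apply: Rinv_0_lt_compat; nra].
  lra.
split => //; apply: Rsqr_inj; rewrite /Rsqr.
- exact: Rlt_le (Lf_gt0 hyb).
- by apply: Rlt_le; apply: Rmult_lt_0_compat => //; apply: Rinv_0_lt_compat.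
- by rewrite Lf_sq // hy; field; lra.
Qed.

Lemma Lf_act z : in_ball z -> Lf (act B z) = Lf z / act_factor B z.
Proof. by move=> hz; case: (in_ball_act hz). Qed.

Lemma act_mmul C z : in_ball z ->
  act (mmul C B) z = act C (act B z) /\
  act_factor (mmul C B) z = act_factor B z * act_factor C (act B z).
Proof.
move=> hz; have hl := act_factor_gt0 hz.
have hm : mapp (mmul C B) (hom z) = vscale (act_factor B z) (mapp C (hom (act B z))).
  by rewrite mapp_mmul mapp_hom_act ?mapp_vscale //; lra.
rewrite /act_factor hm vlast_vscale; split => //.
move: hm; set y := act B z => hm.
apply: functional_extensionality => i; rewrite /act hm vbar_vscale vlast_vscale /vscale.
case: (Req_dec (vlast (mapp C (hom y))) 0) => [->|h0].
  by rewrite Rmult_0_r /Rdiv !Rinv_0 !Rmult_0_r.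
by field; split; lra.
Qed.

Lemma act_inv A z : (forall v, mapp A (mapp B v) = v) -> in_ball z ->
  act A (act B z) = z /\
  mapp A (hom (act B z)) = vscale (/ act_factor B z) (hom z).
Proof.
move=> HAB hz; have hl := act_factor_gt0 hz.
have e : mapp A (hom (act B z)) = vscale (/ act_factor B z) (hom z).
  have hl0 : act_factor B z <> 0 by lra.
  rewrite -[in RHS](HAB (hom z)) (mapp_hom_act hl0) mapp_vscale.
  by apply: functional_extensionality => i; rewrite /vscale; field; lra.
split => //; apply: functional_extensionality => i.
rewrite /act e vbar_vscale vlast_vscale vbar_hom vlast_hom /vscale.
by field; lra.
Qed.

End Action.

Lemma derivable_pt_lim_shift (F : R -> R) t0 l :
  derivable_pt_lim (fun s => F (t0 + s)) 0 l -> derivable_pt_lim F t0 l.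
Proof.
move=> H eps he; have [delta Hd] := H eps he; exists delta => t ht0 htd.
by have := Hd t ht0 htd; rewrite Rplus_0_l Rplus_0_r.
Qed.

Lemma derivable_pt_lim_line d (g : vec d -> R) x X t0 l :
  derivable_pt_lim (fun t => g (vadd (vadd x (vscale t0 X)) (vscale t X))) 0 l ->
  derivable_pt_lim (fun t => g (vadd x (vscale t X))) t0 l.
Proof.
move=> H; apply: derivable_pt_lim_shift.
by under [fun s => _]functional_extensionality => s do rewrite -vadd_line.
Qed.

Lemma derivable_pt_lim_of_bound (F : R -> R) l :
  (forall eps, 0 < eps -> exists delta, 0 < delta /\
     forall t, Rabs t < delta -> Rabs (F t - F 0 - t * l) <= eps * Rabs t) ->
  derivable_pt_lim F 0 l.
Proof.
move=> H eps he; have [delta [hd Hd]] := H (eps / 2) ltac:(lra).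
exists (mkposreal delta hd) => t ht0 htd; rewrite Rplus_0_l.
have hta : 0 < Rabs t by apply: Rabs_pos_lt.
have -> : (F t - F 0) / t - l = (F t - F 0 - t * l) / t by field.
rewrite Rabs_div //; apply/Rlt_div_l => //.
by have := Hd t htd; nra.
Qed.

Lemma Rabs_le_between b c : Rmin 0 b <= c <= Rmax 0 b -> Rabs c <= Rabs b.
Proof. by rewrite /Rmin /Rmax; case: Rle_dec => ? ?; split_Rabs; lra. Qed.

Definition grad d (Df : 'I_d -> vec d -> R) (x : vec d) : vec d := fun i => Df i x.

Definition trunc d (k : nat) (u : vec d) : vec d := fun i => if (i < k)%N then u i else 0.

Lemma Rabs_trunc_le d k (u : vec d) i : Rabs (trunc k u i) <= Rabs (u i).
Proof. by rewrite /trunc; case: ifP => _; rewrite ?Rabs_R0; [lra|exact: Rabs_pos]. Qed.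

Lemma trunc0 d (u : vec d) : trunc 0 u = vzero d.
Proof. by apply: functional_extensionality => i; rewrite /trunc ltn0. Qed.

Lemma trunc_full d (u : vec d) : trunc d u = u.
Proof. by apply: functional_extensionality => i; rewrite /trunc ltn_ord. Qed.

Lemma trunc_succ d k (u : vec d) (hk : (k < d)%N) :
  trunc k.+1 u = vadd (trunc k u) (vscale (u (Ordinal hk)) (basis (Ordinal hk))).
Proof.
apply: functional_extensionality => i; rewrite /trunc /vadd /vscale /basis ltnS.
have -> : (i == Ordinal hk) = (nat_of_ord i == k) by [].
case: (ltngtP i k) => hik; try ring.
have -> : i = Ordinal hk by apply: val_inj.
ring.
Qed.

Lemma rsum_Rabs_trunc_succ d k (u : vec d) (hk : (k < d)%N) :
  rsum (fun i => Rabs (trunc k.+1 u i)) =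
  rsum (fun i => Rabs (trunc k u i)) + Rabs (u (Ordinal hk)).
Proof.
rewrite -(rsum_delta (fun _ => Rabs (u (Ordinal hk))) (Ordinal hk)) -rsum_add.
apply: rsum_ext => i; rewrite /trunc ltnS.
have -> : (i == Ordinal hk) = (nat_of_ord i == k) by [].
case: (ltngtP i k) => hik; rewrite ?Rabs_R0; try ring.
have -> : i = Ordinal hk by apply: val_inj.
ring.
Qed.

Section Differentiability.
Variables (d : nat) (f : vec d -> R) (Df : 'I_d -> vec d -> R).
Hypothesis Df_cont : forall i, cont_on_ball (Df i).
Hypothesis f_partial : forall i z, in_ball z -> has_partial f i z (Df i z).

(* Mean value theorem along the i-th coordinate, plus continuity of [Df i] at [z]. *)
Lemma partial_increment z i : in_ball z -> forall eps, 0 < eps -> exists r, 0 < r /\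
  forall u s, (forall j, Rabs (u j) <= r) -> Rabs s <= r ->
  Rabs (f (vadd (vadd z u) (vscale s (basis i))) - f (vadd z u) - s * Df i z)
  <= eps * Rabs s.
Proof.
move=> hz eps he.
have [dc [hdc Hdc]] := Df_cont i hz he.
have [r1 [hr1 Hr1]] := enorm_lt_of_coord d hdc.
have [r2 [hr2 Hr2]] := in_ball_open hz.
have hr : 0 < Rmin r1 r2 by apply: Rmin_glb_lt.
exists (Rmin r1 r2 / 2); split => [|u s hu hs]; first lra.
pose p sg := vadd (vadd z u) (vscale sg (basis i)).
have Hnear sg : Rabs sg <= Rabs s -> in_ball (p sg) /\ enorm (vsub (p sg) z) < dc.
  move=> hsg; pose v := vadd u (vscale sg (basis i)).
  have hv j : Rabs (v j) <= Rmin r1 r2.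
    rewrite /v /vadd /vscale /basis; apply: Rle_trans (Rabs_triang _ _) _.
    by rewrite Rabs_mult; have := hu j; case: (j == i); rewrite ?Rabs_R1 ?Rabs_R0; lra.
  have -> : p sg = vadd z v.
    by apply: functional_extensionality => j; rewrite /p /v /vadd; ring.
  split; first by apply: Hr2 => j; apply: Rle_trans (hv j) (Rmin_r _ _).
  have -> : vsub (vadd z v) z = v.
    by apply: functional_extensionality => j; rewrite /vsub /vadd; ring.
  by apply: Hr1 => j; apply: Rle_trans (hv j) (Rmin_l _ _).
have Hder sg : Rabs sg <= Rabs s ->
    derivable_pt_lim (fun sg => f (p sg)) sg (Df i (p sg)).
  move=> hsg; apply: derivable_pt_lim_line.
  exact: f_partial (proj1 (Hnear sg hsg)).
have [c [hc Hmvt]] := MVT_gen (fun sg => f (p sg)) 0 s (fun sg => Df i (p sg))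
  (fun sg hsg => proj2 (is_derive_Reals _ _ _) (Hder sg (Rabs_le_between (conj
     (Rlt_le _ _ (proj1 hsg)) (Rlt_le _ _ (proj2 hsg))))))
  (fun sg hsg => derivable_continuous_pt _ _
     (exist _ _ (Hder sg (Rabs_le_between hsg)))).
have [hcb hcd] := Hnear c (Rabs_le_between hc).
rewrite /p vadd_scale0 in Hmvt; rewrite Hmvt Rminus_0_r (Rmult_comm s) -Rmult_minus_distr_r.
rewrite Rabs_mult; apply: Rmult_le_compat_r; first exact: Rabs_pos.
exact: Rlt_le (Hdc _ hcb hcd).
Qed.

Lemma differentiable_trunc z : in_ball z -> forall eps, 0 < eps ->
  forall k, (k <= d)%N -> exists r, 0 < r /\
  forall u, (forall i, Rabs (u i) <= r) ->
  Rabs (f (vadd z (trunc k u)) - f z - dot (trunc k u) (grad Df z))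
  <= eps * rsum (fun i => Rabs (trunc k u i)).
Proof.
move=> hz eps he; elim => [|k IH] hk.
  exists 1; split => [|u _]; first lra.
  rewrite trunc0 dot0 (_ : vadd z _ = z); last first.
    by apply: functional_extensionality => i; rewrite /vadd /vzero; ring.
  rewrite Rminus_diag Rminus_0_l Ropp_0 Rabs_R0.
  by apply: Rmult_le_pos; [lra|apply: rsum_ge0 => _; lra].
have [r1 [hr1 Hr1]] := IH (ltnW hk).
have [r2 [hr2 Hr2]] := partial_increment (Ordinal hk) hz he.
exists (Rmin r1 r2); split => [|u hu]; first exact: Rmin_glb_lt.
set i := Ordinal hk.
have hu2 j : Rabs (trunc k u j) <= r2.
  by apply: Rle_trans (Rabs_trunc_le _ _ _) _; apply: Rle_trans (hu j) (Rmin_r _ _).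
have hs : Rabs (u i) <= r2 by apply: Rle_trans (hu i) (Rmin_r _ _).
have h1 := Hr1 u (fun j => Rle_trans _ _ _ (hu j) (Rmin_l _ _)).
have h2 := Hr2 _ _ hu2 hs.
have -> : vadd z (trunc k.+1 u) = vadd (vadd z (trunc k u)) (vscale (u i) (basis i)).
  by rewrite (trunc_succ u hk); apply: functional_extensionality => j; rewrite /vadd /i; ring.
rewrite (rsum_Rabs_trunc_succ u hk) (trunc_succ u hk) dot_vaddl dot_vscalel dot_basis.
move: h1 h2; rewrite /grad -/i.
by split_Rabs; lra.
Qed.

Lemma line_deriv0 z X : in_ball z ->
  derivable_pt_lim (fun t => f (vadd z (vscale t X))) 0 (dot X (grad Df z)).
Proof.
move=> hz; apply: derivable_pt_lim_of_bound => eps he.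
have hX := rsum_ge0 (F := fun i => Rabs (X i)) (fun i => Rabs_pos _).
set M := rsum (fun i => Rabs (X i)) + 1.
have hM : 0 < M by rewrite /M; lra.
have [r [hr Hr]] := differentiable_trunc hz (Rdiv_lt_0_compat _ _ he hM) (leqnn d).
exists (r / M); split => [|t ht]; first exact: Rdiv_lt_0_compat.
have htM : Rabs t * M < r by move/Rlt_div_r: ht => /(_ hM).
have hu i : Rabs (vscale t X i) <= r.
  rewrite /vscale Rabs_mult; have := rsum_term (F := fun i => Rabs (X i)) i (fun j => Rabs_pos _).
  move=> hXi; apply: Rle_trans (Rlt_le _ _ htM).
  by apply: Rmult_le_compat_l; [exact: Rabs_pos|rewrite /M; lra].
have := Hr _ hu; rewrite trunc_full vadd_scale0 dot_vscalel.
rewrite (rsum_ext (G := fun i => Rabs t * Rabs (X i))); last first.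
  by move=> i; rewrite /vscale Rabs_mult.
rewrite -rsum_scal (_ : rsum _ = M - 1); last by rewrite /M; ring.
have := Rabs_pos t => ht0 h; apply: Rle_trans h _.
rewrite /Rdiv Rmult_assoc; apply: Rmult_le_compat_l; first lra.
have -> : / M * (Rabs t * (M - 1)) = Rabs t - Rabs t / M by field; lra.
by have := Rmult_le_pos _ _ ht0 (Rlt_le _ _ (Rinv_0_lt_compat _ hM)); rewrite /Rdiv; lra.
Qed.

Lemma line_deriv z X t0 : in_ball (vadd z (vscale t0 X)) ->
  derivable_pt_lim (fun t => f (vadd z (vscale t X))) t0
    (dot X (grad Df (vadd z (vscale t0 X)))).
Proof. by move=> hz; apply: derivable_pt_lim_line; exact: line_deriv0. Qed.

End Differentiability.

Lemma is_derive_rsum n (F : 'I_n -> R -> R) (l : 'I_n -> R) t :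
  (forall i, is_derive (F i) t (l i)) ->
  is_derive (fun x => rsum (fun i => F i x)) t (rsum l).
Proof.
elim: n F l => [|n IH] F l H.
  rewrite /rsum big_ord0; apply: (is_derive_ext (fun _ => 0)); last exact: is_derive_const.
  by move=> x; rewrite big_ord0.
rewrite rsum_recr; apply: (is_derive_ext (fun x =>
  rsum (fun k : 'I_n => F (widen_ord (leqnSn n) k) x) + F ord_max x)).
  by move=> x; rewrite rsum_recr.
by apply: is_derive_plus; [apply: IH => i|]; exact: H.
Qed.

Lemma Hess_scale d (D2 : 'I_d -> 'I_d -> vec d -> R) x a b X Y :
  Hess D2 x (vscale a X) (vscale b Y) = a * b * Hess D2 x X Y.
Proof.
rewrite /Hess rsum_scal; apply: rsum_ext => i; rewrite rsum_scal; apply: rsum_ext => j.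
by rewrite /vscale; ring.
Qed.

Section C2Lines.
Variables (d : nat) (h : vec d -> R) (Dh : 'I_d -> vec d -> R)
  (D2h : 'I_d -> 'I_d -> vec d -> R).
Hypothesis HC : C2_with h Dh D2h.

Lemma is_derive_line z X t : in_ball (vadd z (vscale t X)) ->
  is_derive (fun t => h (vadd z (vscale t X))) t (dot X (grad Dh (vadd z (vscale t X)))).
Proof.
move: HC => [_ [Hc1 [_ [Hp1 _]]]] hb; apply/is_derive_Reals.
exact: line_deriv.
Qed.

Lemma is_derive2_line z X t : in_ball (vadd z (vscale t X)) ->
  is_derive (fun t => dot X (grad Dh (vadd z (vscale t X)))) t
    (Hess D2h (vadd z (vscale t X)) X X).
Proof.
move: HC => [_ [_ [Hc2 [_ Hp2]]]] hb.
have -> : Hess D2h (vadd z (vscale t X)) X X =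
   rsum (fun i => X i * dot X (grad (D2h i) (vadd z (vscale t X)))).
  rewrite /Hess; apply: rsum_ext => i; rewrite rsum_scal; apply: rsum_ext => j.
  by rewrite /grad; ring.
apply: is_derive_rsum => i.
apply: (is_derive_scal (fun t => Dh i (vadd z (vscale t X)))); apply/is_derive_Reals.
exact: (line_deriv (fun j => Hc2 i j) (fun j x hx => Hp2 i j x hx)).
Qed.

End C2Lines.

Lemma is_derive_perspective (F F1 : R -> R) p q t : p + t * q <> 0 ->
  is_derive F (t / (p + t * q)) (F1 (t / (p + t * q))) ->
  is_derive (fun t => (p + t * q) * F (t / (p + t * q))) t
    (q * F (t / (p + t * q)) + p * F1 (t / (p + t * q)) / (p + t * q)).
Proof.
move=> hne hF.
have hF' : ex_derive F (t / (p + t * q)) by exists (F1 (t / (p + t * q))).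
auto_derive; first by split.
by rewrite (is_derive_unique _ _ _ hF) /Rdiv; field; lra.
Qed.

Lemma is_derive2_perspective (F F1 F2 : R -> R) p q t : p + t * q <> 0 ->
  is_derive F (t / (p + t * q)) (F1 (t / (p + t * q))) ->
  is_derive F1 (t / (p + t * q)) (F2 (t / (p + t * q))) ->
  is_derive (fun t => q * F (t / (p + t * q)) + p * F1 (t / (p + t * q)) / (p + t * q)) t
    (p * p * F2 (t / (p + t * q)) / ((p + t * q) * (p + t * q) * (p + t * q))).
Proof.
move=> hne hF hF1.
have hF' : ex_derive F (t / (p + t * q)) by exists (F1 (t / (p + t * q))).
have hF1' : ex_derive F1 (t / (p + t * q)) by exists (F2 (t / (p + t * q))).
auto_derive; first by repeat split.
rewrite (is_derive_unique _ _ _ hF) (is_derive_unique _ _ _ hF1).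
by rewrite /Rdiv; field; lra.
Qed.

Lemma affine_of_derive2_eq0 (F F1 : R -> R) :
  (forall t, 0 <= t <= 1 -> is_derive F t (F1 t)) ->
  (forall t, 0 <= t <= 1 -> is_derive F1 t 0) ->
  F 1 = F 0 + F1 0.
Proof.
have mvt (G G1 : R -> R) b : 0 <= b <= 1 ->
    (forall t, 0 <= t <= 1 -> is_derive G t (G1 t)) ->
    exists c, 0 <= c <= b /\ G b - G 0 = G1 c * b.
  move=> hb HG; have hI t : Rmin 0 b <= t <= Rmax 0 b -> 0 <= t <= 1.
    by rewrite Rmin_left ?Rmax_right; lra.
  have [c [hc E]] := MVT_gen G 0 b G1
    (fun t ht => HG t (hI t (conj (Rlt_le _ _ (proj1 ht)) (Rlt_le _ _ (proj2 ht)))))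
    (fun t ht => derivable_continuous_pt _ _
       (exist _ _ (proj1 (is_derive_Reals _ _ _) (HG t (hI t ht))))).
  by exists c; move: hc E; rewrite Rmin_left ?Rmax_right ?Rminus_0_r; lra.
move=> HF HF1.
have [xi [hxi E1]] := mvt F F1 1 ltac:(lra) HF.
have [_ [_ E2]] := mvt F1 (fun _ => 0) xi ltac:(lra) HF1.
lra.
Qed.

(* In the paper's notation: [(B^-1, w) h = h], since [<x, wbar> - w_(d+1) = mink (x,1) w]. *)
Definition affine_fixes d (h : vec d -> R) (B : mmat d) (w : vec d.+1) : Prop :=
  forall z, in_ball z -> act_factor B z * h (act B z) + mink (hom z) w = h z.

Section Transfer.
Variables (d : nat) (h : vec d -> R) (Dh : 'I_d -> vec d -> R)
  (D2h : 'I_d -> 'I_d -> vec d -> R).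
Hypothesis HC : C2_with h Dh D2h.
Variables A B : mmat d.
Hypothesis HB : in_Oplus B.
Hypothesis HAB : forall v, mapp A (mapp B v) = v.
Hypothesis HBA : forall v, mapp B (mapp A v) = v.
Hypothesis Hinv : forall (x X Y V W : vec d), in_ball x ->
  has_dir_deriv (act A) x X V -> has_dir_deriv (act A) x Y W ->
  / Lf x * Hess D2h x X Y = / Lf (act A x) * Hess D2h (act A x) V W.

Let p := act_factor B (vzero d).
Let y0 := act B (vzero d).
Let defect x := h x - act_factor B x * h (act B x).

Lemma act_factor_origin_gt0 : 0 < p.
Proof. by apply: act_factor_gt0; rewrite // /in_ball dot0; lra. Qed.

Section Ray.
Variable z : vec d.
Let ray t := vadd (vzero d) (vscale t z).
Let q := vlast (mapp B (mkv z 0)).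
Let c := vadd (vbar (mapp B (mkv z 0))) (vscale (- q) y0).
Let img s := vadd y0 (vscale s c).

Lemma act_ray t : in_ball (ray t) ->
  act_factor B (ray t) = p + t * q /\ act B (ray t) = img (t / (p + t * q)).
Proof.
move=> hb; have hp := act_factor_origin_gt0; have hl := act_factor_gt0 HB hb.
have hm : mapp B (hom (ray t)) = vadd (mapp B (hom (vzero d))) (vscale t (mapp B (mkv z 0))).
  by rewrite /ray hom_line mapp_vadd mapp_vscale.
have el : act_factor B (ray t) = p + t * q by rewrite {1}/act_factor hm.
split => //; rewrite el in hl.
apply: functional_extensionality => i.
rewrite /img /c /y0 /act -/(act_factor B (ray t)) el -/(act_factor B (vzero d)) -/p hm.
by rewrite /vadd /vscale /vbar; field; lra.
Qed.

Lemma mapp_A_mkv_c : mapp A (mkv c 0) = vadd (mkv z 0) (vscale (- (q / p)) (hom (vzero d))).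
Proof.
have hp := act_factor_origin_gt0.
suff -> : mkv c 0 = vadd (mapp B (mkv z 0)) (vscale (- (q / p)) (mapp B (hom (vzero d)))).
  by rewrite mapp_vadd mapp_vscale !HAB.
apply: vec_eq.
  rewrite vbar_mkv vbar_vadd vbar_vscale; apply: functional_extensionality => i.
  rewrite /c /y0 /act /vadd /vscale -/(act_factor B (vzero d)) -/p /q.
  by field; lra.
by rewrite vlast_mkv vlast_vadd vlast_vscale -/(act_factor B (vzero d)) -/p /q; field; lra.
Qed.

Lemma dir_deriv_img t : in_ball (ray t) ->
  has_dir_deriv (act A) (img (t / (p + t * q))) c
    (vscale ((p + t * q) * (p + t * q) / p) z).
Proof.
move=> hb; have hp := act_factor_origin_gt0; have hl := act_factor_gt0 HB hb.
have [el ea] := act_ray hb; rewrite el in hl.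
have [_ hAy] := act_inv HB HAB hb; rewrite el ea in hAy.
move=> i; apply/is_derive_Reals.
apply: (is_derive_ext (fun u => (t / (p + t * q) + u) * z i /
  (/ (p + t * q) - u * (q / p)))).
  move=> u; rewrite /act hom_line mapp_vadd mapp_vscale hAy mapp_A_mkv_c.
  rewrite !(vbar_vadd, vlast_vadd, vbar_vscale, vlast_vscale, vbar_hom, vlast_hom).
  rewrite vbar_mkv vlast_mkv /ray /vadd /vscale /vzero /Rdiv.
  by congr (_ * / _); ring.
have hil : 0 < / (p + t * q) by apply: Rinv_0_lt_compat.
auto_derive; first lra.
by rewrite /vscale; field; lra.
Qed.

Lemma hess_img t : in_ball (ray t) ->
  Hess D2h (img (t / (p + t * q))) c c =
  (p + t * q) * (p + t * q) * (p + t * q) / (p * p) * Hess D2h (ray t) z z.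
Proof.
move=> hb; have hp := act_factor_origin_gt0; have hl := act_factor_gt0 HB hb.
have [el ea] := act_ray hb; rewrite el in hl.
have [hy hLy] := in_ball_act HB hb; rewrite el ea in hLy; rewrite ea in hy.
have [hAy _] := act_inv HB HAB hb; rewrite ea in hAy.
have hL := Lf_gt0 hb; have hL' := Lf_gt0 hy.
have hD := dir_deriv_img hb.
have := Hinv hy hD hD; rewrite hAy Hess_scale hLy => E.
apply: (Rmult_eq_reg_l (/ (Lf (ray t) / (p + t * q)))).
  by rewrite E; field; lra.
by apply: Rinv_neq_0_compat; apply: Rgt_not_eq; apply: Rdiv_lt_0_compat.
Qed.

Let H s := h (img s).
Let H1 s := dot c (grad Dh (img s)).
Let phi t := h (ray t) - (p + t * q) * H (t / (p + t * q)).
Let phi1 t := dot z (grad Dh (ray t)) -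
  (q * H (t / (p + t * q)) + p * H1 (t / (p + t * q)) / (p + t * q)).

Lemma is_derive_phi t : in_ball (ray t) -> is_derive phi t (phi1 t).
Proof.
move=> hb; have hl := act_factor_gt0 HB hb; have [el ea] := act_ray hb.
have [hy _] := in_ball_act HB hb; rewrite el in hl; rewrite ea in hy.
apply: is_derive_minus; first exact: (is_derive_line HC hb).
apply: (is_derive_perspective (F := H) (F1 := H1)); first lra.
exact: (is_derive_line HC hy).
Qed.

Lemma is_derive_phi1 t : in_ball (ray t) -> is_derive phi1 t 0.
Proof.
move=> hb; have hp := act_factor_origin_gt0; have hl := act_factor_gt0 HB hb; have [el ea] := act_ray hb.
have [hy _] := in_ball_act HB hb; rewrite el in hl; rewrite ea in hy.
have hd := is_derive_minus _ _ _ _ _ (is_derive2_line HC hb)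
  (is_derive2_perspective (F := H) (F1 := H1) (F2 := fun s => Hess D2h (img s) c c)
     (ltac:(lra) : p + t * q <> 0) (is_derive_line HC hy) (is_derive2_line HC hy)).
rewrite hess_img // in hd; move: hd.
rewrite /minus /plus /opp /= -/(ray t).
by rewrite (_ : Hess D2h (ray t) z z + _ = 0) //; field; lra.
Qed.

Lemma defect_ray : in_ball z -> defect z = defect (vzero d) + phi1 0.
Proof.
move=> hz; have hray t : 0 <= t <= 1 -> in_ball (ray t).
  move=> ht; rewrite /ray (_ : vadd _ _ = vscale t z); first exact: in_ball_scale.
  by apply: functional_extensionality => i; rewrite /vadd /vzero; ring.
have defect_phi t : 0 <= t <= 1 -> defect (ray t) = phi t.
  by move=> ht; have [el ea] := act_ray (hray t ht); rewrite /defect el ea.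
have ray1 : ray 1 = z.
  by apply: functional_extensionality => i; rewrite /ray /vadd /vscale /vzero; ring.
have ray0 : ray 0 = vzero d by rewrite /ray vadd_scale0.
rewrite -{1}ray1 -ray0 !defect_phi; try lra.
apply: affine_of_derive2_eq0 => t ht; first exact: is_derive_phi (hray t ht).
exact: is_derive_phi1 (hray t ht).
Qed.

End Ray.

(* The slope at [t = 0] of [defect] along the ray through [z] is [<z, grad h(0)> - mink (B (z,0)) kappa]. *)
Let kappa := mkv (grad Dh y0) (dot y0 (grad Dh y0) - h y0).

Lemma mink_img_kappa z : mink (mapp B (mkv z 0)) kappa = dot z (vbar (mapp A kappa)).
Proof. by rewrite -{1}(HBA kappa) (proj1 HB) mink_mkv; ring. Qed.

Lemma affine_fixes_exists : exists w, affine_fixes h B w.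
Proof.
have hp := act_factor_origin_gt0.
exists (mkv (vadd (grad Dh (vzero d)) (vscale (-1) (vbar (mapp A kappa))))
  (- defect (vzero d))) => z hz.
rewrite hom_mkv mink_mkv vbar_mkv vlast_mkv dot_sym dot_vaddl dot_vscalel.
rewrite (dot_sym (vbar _) z) -mink_img_kappa.
have := defect_ray hz.
rewrite Rmult_0_l Rplus_0_r /Rdiv Rmult_0_l !vadd_scale0 /defect.
rewrite /mink /kappa vbar_mkv vlast_mkv dot_vaddl dot_vscalel dot_sym.
rewrite (Rmult_comm p) Rmult_assoc Rinv_r ?Rmult_1_r; last lra.
by rewrite -/p -/y0; lra.
Qed.

End Transfer.

Lemma affine_fixes_unique d (h : vec d -> R) B w w' :
  affine_fixes h B w -> affine_fixes h B w' -> w = w'.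
Proof. by move=> H1 H2; apply: mink_hom_inj => z hz; have := H1 z hz; have := H2 z hz; lra. Qed.

Lemma affine_fixes_mmul d (h : vec d -> R) A1 B1 B2 w1 w2 :
  in_Oplus A1 -> in_Oplus B1 -> (forall v, mapp A1 (mapp B1 v) = v) ->
  affine_fixes h B1 w1 -> affine_fixes h B2 w2 ->
  affine_fixes h (mmul B2 B1) (vadd w1 (mapp A1 w2)).
Proof.
move=> HA1 HB1 HAB1 H1 H2 z hz.
have hl := act_factor_gt0 HB1 hz; have [hy _] := in_ball_act HB1 hz.
have [ea el] := act_mmul HB1 B2 hz.
have hm : mink (hom z) (mapp A1 w2) = act_factor B1 z * mink (hom (act B1 z)) w2.
  rewrite -{1}(HAB1 (hom z)) mapp_hom_act ?mapp_vscale ?mink_vscalel ?(proj1 HA1) //.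
  lra.
rewrite ea el mink_vaddr hm -(H1 z hz) -(H2 _ hy); ring.
Qed.

Lemma equivariant_term d (B : mmat d) (h : vec d -> R) w z : in_Oplus B -> in_ball z ->
  Lf z / Lf (act B z) * h (act B z) + dot z (vbar w) - vlast w =
  act_factor B z * h (act B z) + mink (hom z) w.
Proof.
move=> HB hz; have hl := act_factor_gt0 HB hz; have hL := Lf_gt0 hz.
by rewrite Lf_act // hom_mkv mink_mkv; field; lra.
Qed.

Lemma mmul_rinv_unique d (A B B' : mmat d) :
  mmul B A = mid d -> mmul A B' = mid d -> B' = B.
Proof.
move=> e1 e2; apply: mat_eq => v.
by rewrite -[LHS]mapp_mid -e1 mapp_mmul -(mapp_mmul A B') e2 mapp_mid.
Qed.

Lemma mmul_inv_mmul d (A1 A2 B1 B2 : mmat d) :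
  mmul A1 B1 = mid d -> mmul A2 B2 = mid d -> mmul (mmul A1 A2) (mmul B2 B1) = mid d.
Proof.
move=> e1 e2; apply: mat_eq => v.
by rewrite !mapp_mmul -(mapp_mmul A2) e2 mapp_mid -mapp_mmul e1.
Qed.

Section Subgroup.
Variables (d : nat) (G : mmat d -> Prop).
Hypothesis HG : is_subgroup G.

Lemma subgroup_inv A B : G A -> mmul A B = mid d ->
  G B /\ (forall v, mapp A (mapp B v) = v) /\ (forall v, mapp B (mapp A v) = v).
Proof.
case: HG => _ [_ [_ Hinv]] hA e.
have [B' [hB' [e1 e2]]] := Hinv A hA.
rewrite (mmul_rinv_unique e2 e); split => //.
by split => v; rewrite -mapp_mmul ?e1 ?e2 mapp_mid.
Qed.

Lemma equivariantE (tau : mmat d -> vec d.+1) h :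
  equivariant G tau h <->
  forall A, G A -> forall B, mmul A B = mid d -> affine_fixes h B (tau A).
Proof.
split=> H A hA B e z hz; have [hB _] := subgroup_inv hA e; have HB := proj1 HG B hB.
  by rewrite -equivariant_term //; apply: H.
by rewrite equivariant_term //; apply: H.
Qed.

End Subgroup.

Theorem lemma3p9 (d : nat) (G : mmat d -> Prop) (h : vec d -> R)
    (Dh : 'I_d -> vec d -> R) (D2h : 'I_d -> 'I_d -> vec d -> R) :
  (2 <= d)%N -> is_subgroup G -> free_action G -> prop_discontinuous G ->
  cocompact G -> C2_with h Dh D2h ->
  (forall (A : mmat d) (x X Y V W : vec d), G A -> in_ball x ->
     has_dir_deriv (act A) x X V -> has_dir_deriv (act A) x Y W ->
     / Lf x * Hess D2h x X Y = / Lf (act A x) * Hess D2h (act A x) V W) ->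
  exists tau : mmat d -> vec d.+1,
    cocycle G tau /\ equivariant G tau h /\
    (forall tau' : mmat d -> vec d.+1, cocycle G tau' -> equivariant G tau' h ->
       forall A, G A -> tau' A = tau A).
Proof.
move=> _ HG _ _ _ HC Hhess; have [HO [_ [Hmul Hinv]]] := HG.
have Hex A : exists w, G A -> forall B, mmul A B = mid d -> affine_fixes h B w.
  case: (classic (G A)) => hA; last by exists (vzero d.+1).
  have [B [hB [eAB eBA]]] := Hinv A hA.
  have [_ [HAB HBA]] := subgroup_inv HG hA eAB.
  have [w Hw] := affine_fixes_exists HC (HO B hB) HAB HBA (fun x X Y V W => Hhess A x X Y V W hA).
  by exists w => _ B' eAB'; rewrite (mmul_rinv_unique eBA eAB').
have [tau Htau] := choice _ Hex.
exists tau; split; [|split].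
- move=> A1 A2 hA1 hA2.
  have [B1 [hB1 [e1 _]]] := Hinv A1 hA1; have [B2 [_ [e2 _]]] := Hinv A2 hA2.
  have [_ [HAB1 _]] := subgroup_inv HG hA1 e1.
  apply: (affine_fixes_unique (Htau _ (Hmul _ _ hA1 hA2) _ (mmul_inv_mmul e1 e2))).
  exact: affine_fixes_mmul (HO _ hA1) (HO _ hB1) HAB1 (Htau _ hA1 _ e1) (Htau _ hA2 _ e2).
- by apply/(equivariantE HG) => A hA; exact: Htau.
- move=> tau' _ /(equivariantE HG) Htau' A hA.
  have [B [_ [e _]]] := Hinv A hA.
  exact: affine_fixes_unique (Htau' A hA B e) (Htau A hA B e).
Qed.
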